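(* Let $k>0$ be real, let $M=\begin{bmatrix} k-1 & k-1 & k\\ 1&0&0\\ 0&1&0\end{bmatrix}$ and $N_0=\begin{bmatrix} k-1 & 2k & 2k\\ 2 & 1-k & 2\\ \frac{2}{k} & \frac{2}{k} & -\frac{1}{k}(k^2+k-2)\end{bmatrix}$. For integers $n\ge1$ put $\mathbf{J}_n=M^n$ and $\mathbf{j}_n=N_0M^n$. Then for all integers $m,n\ge1$: $$\mathbf{j}_{m+n}=\mathbf{j}_m\mathbf{J}_n=\mathbf{J}_m\mathbf{j}_n.$$ *)

From mathcomp Require Import all_boot all_order all_algebra.
From mathcomp Require Import reals.
Set Implicit Arguments. Unset Strict Implicit. Unset Printing Implicit Defensive.
Import GRing.Theory Num.Theory.
Local Open Scope ring_scope.

Definition mx33 (R : nzRingType) (a b c d e f g h i : R) : 'M[R]_3 :=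
  \matrix_(r < 3, s < 3)
    nth 0 (nth [::] [:: [:: a; b; c]; [:: d; e; f]; [:: g; h; i]] r) s.

Definition Mk (R : realType) (k : R) : 'M[R]_3 :=
  mx33 (k - 1) (k - 1) k  1 0 0  0 1 0.

Definition N0k (R : realType) (k : R) : 'M[R]_3 :=
  mx33 (k - 1) (2 * k) (2 * k)
       2 (1 - k) 2
       (2 / k) (2 / k) (- (k ^+ 2 + k - 2) / k).

Definition Jn (R : realType) (k : R) (n : nat) : 'M[R]_3 := (Mk k) ^+ n.
Definition jn (R : realType) (k : R) (n : nat) : 'M[R]_3 := N0k k *m (Mk k) ^+ n.

From mathcomp Require Import all_boot all_order all_algebra.
From mathcomp Require Import reals.
From mathcomp Require Import ring.
Import GRing.Theory Num.Theory.
Local Open Scope ring_scope.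

(* Both identities come from [M^(m+n) = M^m M^n] once [N0] is known to commute
   with [M] (an entrywise rational identity valid for every [k <> 0]), since then
   [N0] commutes with every power of [M]. *)

Section MatrixPowers.

Variables (R : realType) (k : R).

Lemma N0k_Mk_comm : k != 0 -> GRing.comm (N0k k) (Mk k).
Proof.
move=> k0; apply/matrixP => i j; rewrite -!mulmxE !mxE !big_ord_recl !big_ord0.
rewrite /Mk /N0k /mx33 !mxE /=.
by case: i => [[|[|[|i]]] ?] //=; case: j => [[|[|[|j]]] ?] //=;
  rewrite /bump /=; field.
Qed.

Lemma jnD (m n : nat) : jn k (m + n) = jn k m *m Jn k n.
Proof. by rewrite /jn /Jn -mulmxA exprD mulmxE. Qed.

Lemma jnD_Jn (m n : nat) : k != 0 -> jn k (m + n) = Jn k m *m jn k n.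
Proof.
move=> k0; rewrite /jn /Jn !mulmxE exprD mulrA.
by rewrite (commrX m (N0k_Mk_comm k0)) mulrA.
Qed.

End MatrixPowers.

Theorem mainTheorem7 (R : realType) (k : R) (hk : 0 < k) (m n : nat)
  (hm : (1 <= m)%N) (hn : (1 <= n)%N) :
  jn k (m + n) = jn k m *m Jn k n /\ jn k (m + n) = Jn k m *m jn k n.
Proof. by split; [exact: jnD | apply: jnD_Jn; rewrite lt0r_neq0]. Qed.
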